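(* Let $\Phi\subset K$ be nested convex polygons in $\mathbb{R}^2$. For each side $s_i$ of $\Phi$, with outward normal $\nu_i$, let $v_i$ be any vertex of $K$ maximizing $\langle\cdot,\nu_i\rangle$ over $K$, and let $C_i=\operatorname{conv}(\{v_i\}\cup s_i)$ (a possibly degenerate triangle, called the cap based on $s_i$). Then the caps $C_i$ based on all sides of $\Phi$ have pairwise disjoint interiors. *)

From HB Require Import structures.
From mathcomp Require Import all_boot all_order all_algebra.
From mathcomp Require Import all_classical all_reals all_analysis.
Import numFieldNormedType.Exports.
Set Implicit Arguments. Unset Strict Implicit. Unset Printing Implicit Defensive.
Import Order.TTheory GRing.Theory Num.Theory.
Local Open Scope ring_scope.
Local Open Scope classical_set_scope.

Notation pt R := (R * R)%type.
Section Defs.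
Variable R : realType.

Definition dot (u v : pt R) : R := u.1 * v.1 + u.2 * v.2.
Definition cross (u v : pt R) : R := u.1 * v.2 - u.2 * v.1.
Definition vsub (u v : pt R) : pt R := (u.1 - v.1, u.2 - v.2).

Definition hull (n : nat) (f : 'I_n -> pt R) : set (pt R) :=
  [set x | exists w : 'I_n -> R, (forall i, 0 <= w i) /\ \sum_(i < n) w i = 1 /\
     x.1 = \sum_(i < n) w i * (f i).1 /\ x.2 = \sum_(i < n) w i * (f i).2].

Definition tri (a b c : pt R) : set (pt R) :=
  [set x | exists al be ga : R, 0 <= al /\ 0 <= be /\ 0 <= ga /\ al + be + ga = 1 /\
     x.1 = al * a.1 + be * b.1 + ga * c.1 /\ x.2 = al * a.2 + be * b.2 + ga * c.2].

(* p : 'I_n -> pt lists the vertices of a (non-degenerate) convex polygon in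
   counterclockwise order: every vertex other than the endpoints of side
   [p i, p (i+1)] lies strictly to the left of that side. *)
Definition ccw_convex_polygon (n : nat) (p : 'I_n -> pt R) : Prop :=
  (3 <= n)%N /\
  forall i j : 'I_n, j != i -> j != ordS i ->
    0 < cross (vsub (p (ordS i)) (p i)) (vsub (p j) (p i)).

(* outward unit-free normal to the side [p i, p (i+1)] of a ccw polygon *)
Definition out_normal (n : nat) (p : 'I_n -> pt R) (i : 'I_n) : pt R :=
  let d := vsub (p (ordS i)) (p i) in (d.2, - d.1).

Definition cap (n : nat) (p : 'I_n -> pt R) (i : 'I_n) (v : pt R) : set (pt R) :=
  tri v (p i) (p (ordS i)).
End Defs.

From HB Require Import structures.
From mathcomp Require Import all_boot all_order all_algebra.
From mathcomp Require Import all_classical all_reals all_analysis.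
From mathcomp Require Import ring lra zify.
Import numFieldNormedType.Exports.
Import Order.TTheory GRing.Theory Num.Theory.
Local Open Scope ring_scope.
Local Open Scope classical_set_scope.

(* Measure heights above side i of Phi by h_i(x) = <x - p_i, nu_i>.  On the
   cap C_i = conv(v_i, p_i, p_(i+1)) the height is (weight of v_i) * h_i(v_i),
   while on any other cap it is at most (weight of the apex) * h_i(v_i), since
   v_i maximizes h_i over K and vertices of Phi have height <= 0.  Comparing
   the two representations of a common point of C_i and C_j in both h_i and
   h_j forces the weights of C_i on the vertices of Phi strictly below side j
   to vanish.  As Phi has at least three vertices, at least one of p_i,
   p_(i+1) is such a vertex, so C_i meet C_j lies on a line through v_i (or
   C_i itself is flat when h_i(v_i) = 0), and a line has empty interior. *)

Lemma iter_ordS_val n (i : 'I_n) k : val (iter k (@ordS n) i) = ((i + k) %% n)%N.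
Proof.
elim: k => [|k IH] /=; first by rewrite addn0 modn_small.
by rewrite IH -addn1 modnDml addn1 addnS.
Qed.

Lemma iter_ordS_neq n (i : 'I_n) k : (0 < k < n)%N -> iter k (@ordS n) i != i.
Proof.
move=> /andP [k_gt0 k_ltn]; apply/eqP => /(congr1 val); rewrite iter_ordS_val => E.
have : (k + i == 0 + i %[mod n])%N by rewrite addnC E add0n modn_small.
by rewrite eqn_modDr mod0n modn_small //; lia.
Qed.

Section PlaneGeometry.
Context {R : realType}.
Implicit Types (a b c u x : pt R) (al be ga h k : R).

Definition normal a b : pt R := let d := vsub b a in (d.2, - d.1).

Lemma normal_eq0 a b : (normal a b == 0) = (a == b).
Proof.
case: a b => [a1 a2] [b1 b2]; rewrite /normal /vsub /= !xpair_eqE oppr_eq0 !subr_eq0.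
by rewrite andbC ![_ == a1]eq_sym ![_ == a2]eq_sym.
Qed.

Lemma dot_normalr a b : dot b (normal a b) = dot a (normal a b).
Proof. by rewrite /dot /normal /vsub /=; ring. Qed.

Lemma dot_barycentric {a b c x u al be ga h} : al + be + ga = 1 ->
  x.1 = al * a.1 + be * b.1 + ga * c.1 -> x.2 = al * a.2 + be * b.2 + ga * c.2 ->
  dot x u - h = al * (dot a u - h) + be * (dot b u - h) + ga * (dot c u - h).
Proof.
move=> w_sum x1 x2; have ga_eq : ga = 1 - al - be by lra.
by rewrite /dot x1 x2 ga_eq; ring.
Qed.

Lemma dot_barycentric_edge {a b c x al be ga} : al + be + ga = 1 ->
  x.1 = al * a.1 + be * b.1 + ga * c.1 -> x.2 = al * a.2 + be * b.2 + ga * c.2 ->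
  ga = 0 -> dot x (normal a b) = dot a (normal a b).
Proof.
move=> w_sum x1 x2 ga0; apply/eqP; rewrite -subr_eq0 (dot_barycentric w_sum x1 x2).
by rewrite subrr dot_normalr subrr ga0 !mulr0 mul0r !addr0.
Qed.

Lemma weight0_below {w hgt : R} : w * hgt = 0 -> hgt < 0 -> w = 0.
Proof. by move=> /eqP; rewrite mulf_eq0 => /orP [/eqP //|/eqP ->]; rewrite ltxx. Qed.

Lemma interior_subset_line {S : set (pt R)} {u k} :
  u != 0 -> S `<=` [set x | dot x u = k] -> interior S = set0.
Proof.
case: u => u1 u2 u_neq0 S_line; apply/seteqP; split => // x.
move=> /(interiorS S_line) /nbhs_ballP [e /= e_gt0 ball_line].
have near_x (d1 d2 : R) :
    `|d1| < e -> `|d2| < e -> dot (x.1 + d1, x.2 + d2) (u1, u2) = k.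
  move=> d1_lt d2_lt; apply: ball_line; split; rewrite /= -ball_normE /ball_ /=;
    by rewrite opprD addrA subrr add0r normrN.
have e2_small : `|e / 2| < e by rewrite ger0_norm ?divr_ge0 ?ltW //; lra.
have e0_small : `|0 : R| < e by rewrite normr0.
have := near_x 0 0 e0_small e0_small; have := near_x (e / 2) 0 e2_small e0_small.
have := near_x 0 (e / 2) e0_small e2_small; rewrite /dot /= => E2 E1 E0.
have e2_neq0 : e / 2 != 0 by rewrite gt_eqF // divr_gt0.
move: u_neq0; rewrite xpair_eqE.
have -> : u1 = 0 by apply: (mulIf e2_neq0); lra.
have -> : u2 = 0 by apply: (mulIf e2_neq0); lra.
by rewrite eqxx.
Qed.

Lemma hull_vertex {n : nat} (f : 'I_n -> pt R) i : hull f (f i).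
Proof.
exists (fun j => (j == i)%:R); split; first by move=> j; rewrite ler0n.
have pick_i (F : 'I_n -> R) : \sum_(j < n) (j == i)%:R * F j = F i.
  rewrite (bigD1 i) //= eqxx mul1r big1 ?addr0 // => j /negbTE ->.
  by rewrite mul0r.
split; last by rewrite !pick_i.
by have := pick_i (fun _ => 1); under eq_bigr do rewrite mulr1.
Qed.

End PlaneGeometry.

Section Caps.
Variables (R : realType) (n m : nat) (p : 'I_n -> pt R) (q : 'I_m -> pt R)
  (c : 'I_n -> 'I_m).
Hypotheses (p_convex : ccw_convex_polygon p) (hull_sub : hull p `<=` hull q)
  (apex_max : forall i : 'I_n, forall x, hull q x ->
     dot x (out_normal p i) <= dot (q (c i)) (out_normal p i)).

Definition height i x := dot x (out_normal p i) - dot (p i) (out_normal p i).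

Lemma height_vertex i : height i (p i) = 0.
Proof. exact: subrr. Qed.

Lemma height_next_vertex i : height i (p (ordS i)) = 0.
Proof. by rewrite /height (dot_normalr (p i)) subrr. Qed.

Lemma height_vertex_lt0 {i j} : j != i -> j != ordS i -> height i (p j) < 0.
Proof.
move=> ji jSi; have := p_convex.2 i j ji jSi.
by rewrite /height /dot /cross /out_normal /vsub /=; lra.
Qed.

Lemma height_vertex_le0 i j : height i (p j) <= 0.
Proof.
have [->|ji] := eqVneq j i; first by rewrite height_vertex.
have [->|jSi] := eqVneq j (ordS i); first by rewrite height_next_vertex.
exact/ltW/height_vertex_lt0.
Qed.

Lemma height_le_apex i {x} : hull q x -> height i x <= height i (q (c i)).
Proof. by move=> Kx; rewrite lerD2r apex_max. Qed.

Lemma height_apex_ge0 i : 0 <= height i (q (c i)).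
Proof. by rewrite -(height_vertex i); apply/height_le_apex/hull_sub/hull_vertex. Qed.

Lemma ordS_neq (i : 'I_n) : ordS i != i.
Proof. by apply: (@iter_ordS_neq n i 1); have := p_convex.1; lia. Qed.

Lemma ordSS_neq (i : 'I_n) : ordS (ordS i) != i.
Proof. by apply: (@iter_ordS_neq n i 2); have := p_convex.1; lia. Qed.

Lemma out_normal_neq0 i : out_normal p i != 0.
Proof.
have := height_vertex_lt0 (ordSS_neq i) (ordS_neq (ordS i)).
apply: contraTneq.
by rewrite /height => ->; rewrite /dot !mulr0 !addr0 subrr ltxx.
Qed.

Lemma height_barycentric {i} j {x al be ga} : al + be + ga = 1 ->
  x.1 = al * (q (c i)).1 + be * (p i).1 + ga * (p (ordS i)).1 ->
  x.2 = al * (q (c i)).2 + be * (p i).2 + ga * (p (ordS i)).2 ->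
  height j x = al * height j (q (c i)) + be * height j (p i)
               + ga * height j (p (ordS i)).
Proof. exact: dot_barycentric. Qed.

Lemma cap_flat {i} : height i (q (c i)) = 0 ->
  cap p i (q (c i)) `<=` [set x | dot x (out_normal p i) = dot (p i) (out_normal p i)].
Proof.
move=> apex0 x [al [be [ga [_ [_ [_ [w_sum [x1 x2]]]]]]]]; apply/eqP; rewrite -subr_eq0.
by rewrite -/(height i x) (height_barycentric _ w_sum x1 x2) apex0 height_vertex
  height_next_vertex !mulr0 !addr0.
Qed.

Lemma cap_meet_weights {i} j {x al be ga} : 0 < height i (q (c i)) ->
  0 <= al -> 0 <= be -> 0 <= ga -> al + be + ga = 1 ->
  x.1 = al * (q (c i)).1 + be * (p i).1 + ga * (p (ordS i)).1 ->
  x.2 = al * (q (c i)).2 + be * (p i).2 + ga * (p (ordS i)).2 ->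
  cap p j (q (c j)) x ->
  be * height j (p i) = 0 /\ ga * height j (p (ordS i)) = 0.
Proof.
move=> apex_i_gt0 al_ge0 be_ge0 ga_ge0 w_sum x1 x2.
move=> [al' [be' [ga' [al'_ge0 [be'_ge0 [ga'_ge0 [w_sum' [x1' x2']]]]]]]].
have hi := height_barycentric i w_sum x1 x2.
have hi' := height_barycentric i w_sum' x1' x2'.
have hj := height_barycentric j w_sum x1 x2.
have hj' := height_barycentric j w_sum' x1' x2'.
rewrite height_vertex height_next_vertex !mulr0 !addr0 in hi.
rewrite height_vertex height_next_vertex !mulr0 !addr0 in hj'.
have al_le : al <= al'.
  rewrite -(ler_pM2r apex_i_gt0) -hi hi'.
  have := height_le_apex i (hull_vertex q (c j)).
  have := height_vertex_le0 i j; have := height_vertex_le0 i (ordS j).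
  by nra.
have := height_le_apex j (hull_vertex q (c i)); have := height_apex_ge0 j.
have := height_vertex_le0 j i; have := height_vertex_le0 j (ordS i).
by nra.
Qed.

Lemma cap_meet_line {i j} : i != j -> 0 < height i (q (c i)) ->
  exists u k, u != 0 /\
    cap p i (q (c i)) `&` cap p j (q (c j)) `<=` [set x | dot x u = k].
Proof.
move=> ij apex_i_gt0.
have apex_neq (k : 'I_n) : height i (p k) = 0 -> q (c i) != p k.
  by move=> hk; apply: contraTneq apex_i_gt0 => ->; rewrite hk ltxx.
have [iSj|iSjN] := eqVneq i (ordS j).
- have Sij : ordS i != j by rewrite iSj ordSS_neq.
  have SiSj : ordS i != ordS j by rewrite -iSj ordS_neq.
  exists (normal (q (c i)) (p i)), (dot (q (c i)) (normal (q (c i)) (p i))).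
  split; first by rewrite normal_eq0 apex_neq ?height_vertex.
  move=> x [[al [be [ga [al_ge0 [be_ge0 [ga_ge0 [w_sum [x1 x2]]]]]]]] Cjx].
  have [_ ga0] := cap_meet_weights j apex_i_gt0 al_ge0 be_ge0 ga_ge0 w_sum x1 x2 Cjx.
  exact: dot_barycentric_edge w_sum x1 x2 (weight0_below ga0 (height_vertex_lt0 Sij SiSj)).
- exists (normal (q (c i)) (p (ordS i))), (dot (q (c i)) (normal (q (c i)) (p (ordS i)))).
  split; first by rewrite normal_eq0 apex_neq ?height_next_vertex.
  move=> x [[al [be [ga [al_ge0 [be_ge0 [ga_ge0 [w_sum [x1 x2]]]]]]]] Cjx].
  have [be0 _] := cap_meet_weights j apex_i_gt0 al_ge0 be_ge0 ga_ge0 w_sum x1 x2 Cjx.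
  rewrite addrAC in w_sum; rewrite addrAC in x1; rewrite addrAC in x2.
  exact: dot_barycentric_edge w_sum x1 x2 (weight0_below be0 (height_vertex_lt0 ij iSjN)).
Qed.

Lemma cap_interiors_disjoint i j : i != j ->
  interior (cap p i (q (c i))) `&` interior (cap p j (q (c j))) = set0.
Proof.
move=> ij; rewrite -interiorI.
have [apex0|apex_neq0] := eqVneq (height i (q (c i))) 0.
  apply: (interior_subset_line (out_normal_neq0 i)).
  by move=> x [Cix _]; apply: cap_flat apex0 x Cix.
have apex_gt0 : 0 < height i (q (c i)) by rewrite lt0r apex_neq0 height_apex_ge0.
have [u [k [u_neq0 meet_line]]] := cap_meet_line ij apex_gt0.
exact: interior_subset_line u_neq0 meet_line.
Qed.

End Caps.

Theorem lemma7p1 (R : realType) (n m : nat) (p : 'I_n -> pt R) (q : 'I_m -> pt R)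
    (c : 'I_n -> 'I_m) :
  ccw_convex_polygon p -> ccw_convex_polygon q ->
  hull p `<=` hull q ->
  (forall i : 'I_n, forall x, hull q x ->
     dot x (out_normal p i) <= dot (q (c i)) (out_normal p i)) ->
  forall i j : 'I_n, i != j ->
    interior (cap p i (q (c i))) `&` interior (cap p j (q (c j))) = set0.
Proof.
move=> p_convex _ hull_sub apex_max; exact: cap_interiors_disjoint.
Qed.
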